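(* Let $S$ be a smooth projective surface with $b_1(S)=0$, $p_g(S)>0$, let $\pi:\widetilde S\to S$ be the blow-up at one point with exceptional divisor $E$, let $c_1\in H^2(S,\mathbb{Z})$, $\ell\in\{0,1,2\}$, and $\widetilde c_1=\pi^*c_1-\ell E$. Let $\mathrm{SW}$ be the Seiberg–Witten invariants of $S$ and define those of $\widetilde S$ by $\widetilde{\mathrm{SW}}(\pi^*a)=\widetilde{\mathrm{SW}}(\pi^*a+E)=\mathrm{SW}(a)$ for $a\in H^2(S,\mathbb{Z})$, and $\widetilde{\mathrm{SW}}=0$ on all other classes. With $\mathsf{Z}^{\mathrm{inst}}$ defined as in the context (using $\widetilde{\mathrm{SW}}$, $K_{\widetilde S}=\pi^*K_S+E$, $\chi(\mathcal{O}_{\widetilde S})=\chi(\mathcal{O}_S)$ for $\widetilde S$), one has $$\mathsf{Z}^{\mathrm{inst}}_{\widetilde S,\widetilde c_1}(x,y)=\begin{cases}\dfrac{\Theta_{A_2,(0,0)}(x^3,y)}{\overline\eta(x^6)^3}\,\mathsf{Z}^{\mathrm{inst}}_{S,c_1}(x,y),&\ell=0,\\[2ex]\dfrac{\Theta_{A_2,(1,0)}(x^3,y)}{\overline\eta(x^6)^3}\,\mathsf{Z}^{\mathrm{inst}}_{S,c_1}(x,y),&\ell=1,2.\end{cases}$$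
   Context: $\epsilon=e^{2\pi i/3}$. For a surface $X$ with invariants $\chi=\chi(\mathcal{O}_X)$, canonical class $K$, Seiberg–Witten function $\mathrm{SW}$ (finitely supported on $H^2(X,\mathbb{Z})$), and $c\in H^2(X,\mathbb{Z})$, define $\psi_{X,c}(x,y):=9\Big(\frac{1}{3\prod_{n\ge1}(1-x^{2n})^{10}(1-x^{2n}y)(1-x^{2n}y^{-1})}\Big)^{\chi}\Big(\frac{\Theta_{A_2^\vee,(0,1)}(x,y)}{3\overline{\eta}(x^6)^3}\Big)^{-K^2}\sum_{a,b\in H^2(X,\mathbb{Z})}\mathrm{SW}(a)\mathrm{SW}(b)\epsilon^{(a-b)c}Z_+(x,y)^{ab}Z_-(x,y)^{(K-a)(K-b)}$, and writing $\psi_{X,c}=\sum_n\psi_n(y)x^n$, set $\mathsf{Z}^{\mathrm{inst}}_{X,c}(x,y):=\sum_{n\equiv-2c^2-8\chi\ (\mathrm{mod}\ 3)}\psi_n(y)x^n=\frac13\sum_{k=0}^2\epsilon^{k(2c^2+8\chi)}\psi_{X,c}(\epsilon^kx,y)$. Here $\overline\eta(x)=\prod_{n\ge1}(1-x^n)$; $\Theta_{A_2,(0,0)}(x,y)=\sum_{(m,n)\in\mathbb{Z}^2}x^{2(m^2-mn+n^2)}y^{m+n}$, $\Theta_{A_2,(1,0)}(x,y)=\sum_{(m,n)}x^{2(m^2-mn+n^2+m-n+\frac13)}y^{m+n}$, $\Theta_{A_2^\vee,(0,0)}(x,y)=\sum_{(m,n)}x^{2(m^2+mn+n^2)}y^{m+n}$,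 $\Theta_{A_2^\vee,(0,1)}(x,y)=\sum_{(m,n)}\epsilon^{m-n}x^{2(m^2+mn+n^2)}y^{m+n}$; $Z=\Theta_{A_2^\vee,(0,0)}/\Theta_{A_2^\vee,(0,1)}$ and $Z_\pm(x,y)$ are the two roots in $\zeta$ of $\zeta^2-(Z(x,y)^2+3Z(x,y)Z(x,1))\zeta+Z(x,y)+3Z(x,1)=0$. (Under the paper's Conjecture 1, $\mathsf{Z}^{\mathrm{inst}}_{X,c}(x,y)=\sum_{c_2}\overline\chi^{\mathrm{vir}}_{-y}(M_X^H(3,c,c_2))x^{\mathrm{vd}}$.) *)

From HB Require Import structures.
From mathcomp Require Import all_boot all_order all_algebra.
From mathcomp Require Import algC.
Set Implicit Arguments. Unset Strict Implicit. Unset Printing Implicit Defensive.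
Import Order.TTheory GRing.Theory Num.Theory.
Local Open Scope ring_scope.

(* Coefficient field: C = algC(w), with w = y^(1/2) a formal variable.      *)
(* The variable y of the paper is y := w^2.  (Half-integer powers of y and  *)
(* sqrt(3) occur in the coefficients of Z_+ and Z_-.)         *)
Definition C : fieldType := {fraction {poly algC}}.
Definition tofracC (p : {poly algC}) : C := @FracField.tofrac _ p.
Definition cst (z : algC) : C := tofracC z%:P.
Definition yw : C := tofracC 'X.
Definition yvar : C := yw ^+ 2.

(* epsilon = exp(2 pi i / 3) = (-1 + i sqrt 3)/2 *)
Definition eps : algC := (-1 + 'i * sqrtC 3) / 2%:R.
Definition epsC : C := cst eps.

(* Formal power series in x over C, as coefficient functions.               *)
Definition series := nat -> C.

Definition sconst (c : C) : series := fun n => if n == 0%N then c else 0.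
Definition sone : series := sconst 1.
Definition sadd (f g : series) : series := fun n => f n + g n.
Definition sscale (c : C) (f : series) : series := fun n => c * f n.
Definition smul (f g : series) : series :=
  fun n => \sum_(i < n.+1) f i * g (n - i)%N.

(* multiplicative inverse (meaningful when f 0 != 0) *)
Fixpoint sinv_seq (f : series) (n : nat) : seq C :=
  match n with
  | 0 => [:: (f 0%N)^-1]
  | n'.+1 => let s := sinv_seq f n' in
      rcons s (- (f 0%N)^-1 * \sum_(i < n) f i.+1 * nth 0 s (n' - i)%N)
  end.
Definition sinv (f : series) : series := fun n => nth 0 (sinv_seq f n) n.

Definition spow (f : series) (n : nat) : series := iter n (smul f) sone.
Definition spowz (f : series) (z : int) : series :=
  match z with
  | Posz n => spow f n
  | Negz n => spow (sinv f) n.+1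
  end.

(* the series 1 - c x^d  (d >= 1) *)
Definition sbinom (c : C) (d : nat) : series :=
  fun n => if n == 0%N then 1 else if n == d then - c else 0.

(* infinite product prod_{n >= 1} F n, where F n = 1 + O(x^n):
   the coefficient of x^k only depends on the factors n <= k. *)
Fixpoint sprod_upto (F : nat -> series) (k : nat) : series :=
  match k with
  | 0 => sone
  | k'.+1 => smul (sprod_upto F k') (F k)
  end.
Definition sinfprod (F : nat -> series) : series := fun k => sprod_upto F k k.

Definition sproj3 (r : int) (f : series) : series :=
  fun n => if ((n%:Z - r) %% 3 == 0)%Z then f n else 0.

(* Theta functions.  A lattice sum over (m,n) in Z^2 whose x-exponent is    *)
(* e(m,n) >= 0: the coefficient of x^k collects the (m,n) with e(m,n) = k.  *)
(* For all lattice sums below, e(m,n) = k forces |m|,|n| <= k+1.            *)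
Definition lattice_sum (e : int -> int -> int) (w : int -> int -> C) : series :=
  fun k => \sum_(i < (2 * k + 3)%N) \sum_(j < (2 * k + 3)%N)
     let m := (i%:Z - (k.+1)%:Z)%R in let n := (j%:Z - (k.+1)%:Z)%R in
     if e m n == k%:Z then w m n else 0.

(* Theta_{A2,(0,0)}(x,y), Theta_{A2,(1,0)}(x,y) are only needed at x^3: *)
Definition ThetaA2_00_x3 : series :=
  lattice_sum (fun m n => 6 * (m * m - m * n + n * n)) (fun m n => yvar ^ (m + n)).
(* Theta_{A2,(1,0)}(x^3,y) = sum x^{6(m^2-mn+n^2+m-n+1/3)} y^{m+n} *)
Definition ThetaA2_10_x3 : series :=
  lattice_sum (fun m n => 6 * (m * m - m * n + n * n + m - n) + 2)
              (fun m n => yvar ^ (m + n)).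
Definition ThetaA2v_00 (yv : C) : series :=
  lattice_sum (fun m n => 2 * (m * m + m * n + n * n)) (fun m n => yv ^ (m + n)).
Definition ThetaA2v_01 (yv : C) : series :=
  lattice_sum (fun m n => 2 * (m * m + m * n + n * n))
              (fun m n => epsC ^ (m - n) * yv ^ (m + n)).

Definition etabar_x6 : series := sinfprod (fun n => sbinom 1 (6 * n)).

Definition Zser (yv : C) : series := smul (ThetaA2v_00 yv) (sinv (ThetaA2v_01 yv)).
(* Z_+ and Z_- are the roots of zeta^2 - Ztr zeta + Znm *)
Definition Ztr : series :=
  sadd (smul (Zser yvar) (Zser yvar)) (sscale 3%:R (smul (Zser yvar) (Zser 1))).
Definition Znm : series := sadd (Zser yvar) (sscale 3%:R (Zser 1)).
Definition are_Zpm (zp zm : series) : Prop :=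
  (forall n, sadd zp zm n = Ztr n) /\ (forall n, smul zp zm n = Znm n).

Definition Gser : series :=
  sinv (sscale 3%:R (sinfprod (fun n =>
     smul (spow (sbinom 1 (2 * n)) 10)
          (smul (sbinom yvar (2 * n)) (sbinom yvar^-1 (2 * n)))))).

Definition Hser : series :=
  smul (ThetaA2v_01 yvar) (sinv (sscale 3%:R (spow etabar_x6 3))).

(* Surface data.  H^2(X,Z) is an abelian group V with the (integer valued,  *)
(* symmetric, biadditive) intersection pairing dot.  SW is finitely         *)
(* supported; B is a duplicate-free list containing its support.            *)
Definition is_pairing (V : zmodType) (dot : V -> V -> int) : Prop :=
  (forall a b, dot a b = dot b a) /\ (forall a b c, dot (a + b) c = dot a c + dot b c).

Definition psi (V : eqType) (dot : V -> V -> int) (chi : int) (K : V)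
   (SW : V -> int) (B : seq V) (sub : V -> V -> V) (c : V) (zp zm : series) : series :=
  sscale 9%:R (smul (spowz Gser chi) (smul (spowz Hser (- dot K K))
    (fun n => \sum_(a <- B) \sum_(b <- B)
        smul (sscale (((SW a * SW b)%:~R : C) * epsC ^ (dot (sub a b) c))
                     (spowz zp (dot a b)))
             (spowz zm (dot (sub K a) (sub K b))) n))).

Definition Zinst (V : zmodType) (dot : V -> V -> int) (chi : int) (K : V)
   (SW : V -> int) (B : seq V) (c : V) (zp zm : series) : series :=
  sproj3 (- 2 * dot c c - 8 * chi) (psi dot chi K SW B (fun a b => a - b) c zp zm).

(* Blow-up at one point: H^2(S~) = H^2(S) (+) Z E, pi^* a = (a,0), E=(0,1),  *)
(* (a,s).(b,t) = a.b - s t.                                                *)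
Definition bl_dot (V : zmodType) (dot : V -> V -> int) (u v : V * int) : int :=
  dot u.1 v.1 - u.2 * v.2.
Definition bl_pull (V : zmodType) (a : V) : V * int := (a, 0).
Definition bl_E (V : zmodType) : V * int := (0, 1).
Definition bl_SW (V : zmodType) (SW : V -> int) (u : V * int) : int :=
  if (u.2 == 0) || (u.2 == 1) then SW u.1 else 0.
Definition bl_B (V : zmodType) (B : seq V) : seq (V * int) :=
  [seq bl_pull a | a <- B] ++ [seq bl_pull a + bl_E V | a <- B].

From HB Require Import structures.
From mathcomp Require Import all_boot all_order all_algebra.
From mathcomp Require Import algC.
From mathcomp Require Import boolp.
From mathcomp Require Import zify ring.
Import Order.TTheory GRing.Theory Num.Theory.
Local Open Scope ring_scope.
Set Implicit Arguments. Unset Strict Implicit.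

(* Writing H^2(S~) = H^2(S) (+) Z E, every class of S~ with nonzero SW
   invariant is a + sE with s in {0,1}, and the term (a + sE, b + tE) of
   the SW sum of S~ is the term (a, b) of S times eps^((s-t)l) Z_+^(-st)
   Z_-^(-(1-s)(1-t)).  Summing over s, t and using K~^2 = K^2 - 1 gives
     psi_{S~,c~} = H (1/Z_+ + 1/Z_- + eps^l + eps^-l) psi_{S,c1},
   and 1/Z_+ + 1/Z_- = Z by Vieta.  Splitting the A2^v lattice into the
   three cosets of a sublattice isometric to A2(3) shows
     Theta_{A2^v,(0,0)} + (eps^l + eps^-l) Theta_{A2^v,(0,1)} = 3 Theta_{A2,(l)}(x^3),
   so the factor is Theta_{A2,(l)}(x^3,y) / etabar(x^6)^3.  It is supported on
   exponents = 2 l^2 (mod 3), the shift of the residue class defining Zinst,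
   hence it commutes with that projection. *)

HB.instance Definition _ := Choice.on series.

Definition szero : series := fun _ => 0.
Definition sopp (f : series) : series := fun n => - f n.

Lemma saddA : associative sadd.
Proof. by move=> f g h; apply/funext=> n; rewrite /sadd addrA. Qed.
Lemma saddC : commutative sadd.
Proof. by move=> f g; apply/funext=> n; rewrite /sadd addrC. Qed.
Lemma sadd0 : left_id szero sadd.
Proof. by move=> f; apply/funext=> n; rewrite /sadd /szero add0r. Qed.
Lemma saddN : left_inverse szero sopp sadd.
Proof. by move=> f; apply/funext=> n; rewrite /sadd /szero /sopp addNr. Qed.

HB.instance Definition _ := GRing.isZmodule.Build series saddA saddC sadd0 saddN.

Lemma seriesD (f g : series) n : (f + g) n = f n + g n. Proof. by []. Qed.

Lemma series_sum (I : Type) (r : seq I) (P : pred I) (F : I -> series) n :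
  (\sum_(i <- r | P i) F i) n = \sum_(i <- r | P i) F i n.
Proof. by elim/big_rec2: _ => // i y1 y2 _ <-. Qed.

(* The coefficients of [smul f g] up to x^n are those of the product of the
   truncations of [f] and [g] at degree n; this transports the ring laws of
   polynomials to series. *)
Definition trunc (f : series) (n : nat) : {poly C} := \poly_(i < n.+1) f i.

Lemma coefM_agree (p p' q q' : {poly C}) n :
  (forall i, (i <= n)%N -> p`_i = p'`_i) -> (forall i, (i <= n)%N -> q`_i = q'`_i) ->
  (p * q)`_n = (p' * q')`_n.
Proof.
move=> Hp Hq; rewrite !coefM; apply: eq_bigr => i _.
by rewrite Hp ?Hq ?leq_subr // -ltnS.
Qed.

Lemma smul_trunc (f g : series) n : smul f g n = (trunc f n * trunc g n)`_n.
Proof.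
rewrite coefM /smul; apply: eq_bigr => i _.
by rewrite !coef_poly ltn_ord ltnS leq_subr.
Qed.

Lemma coef_trunc_smul (f g : series) n i :
  (i <= n)%N -> (trunc (smul f g) n)`_i = (trunc f n * trunc g n)`_i.
Proof.
move=> le_in; rewrite coef_poly ltnS le_in smul_trunc.
by apply: coefM_agree => j le_ji; rewrite !coef_poly !ltnS le_ji (leq_trans le_ji).
Qed.

Lemma smulA : associative smul.
Proof.
move=> f g h; apply/funext=> n.
have -> : smul f (smul g h) n = (trunc f n * (trunc g n * trunc h n))`_n.
  by rewrite smul_trunc; apply: coefM_agree => // i; apply: coef_trunc_smul.
have -> : smul (smul f g) h n = (trunc f n * trunc g n * trunc h n)`_n.
  by rewrite smul_trunc; apply: coefM_agree => // i; apply: coef_trunc_smul.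
by rewrite mulrA.
Qed.

Lemma smulC : commutative smul.
Proof. by move=> f g; apply/funext=> n; rewrite !smul_trunc mulrC. Qed.

Lemma smul1 : left_id sone smul.
Proof.
move=> f; apply/funext=> n; rewrite /smul big_ord_recl /sone /sconst /= mul1r subn0.
by rewrite big1 ?addr0 // => i _; rewrite mul0r.
Qed.

Lemma smulDl : left_distributive smul sadd.
Proof.
move=> f g h; apply/funext=> n; rewrite /smul /sadd -big_split /=.
by apply: eq_bigr => i _; rewrite mulrDl.
Qed.

Lemma sone_neq0 : sone != 0.
Proof. by apply/eqP => /(congr1 (fun f : series => f 0%N)) /eqP; rewrite oner_eq0. Qed.

HB.instance Definition _ :=
  GRing.Zmodule_isComNzRing.Build series smulA smulC smul1 smulDl sone_neq0.

Lemma seriesM0 (f g : series) : (f * g) 0%N = f 0%N * g 0%N.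
Proof. by rewrite /GRing.mul /= /smul big_ord1. Qed.

Lemma seriesX0 (f : series) k : (f ^+ k) 0%N = f 0%N ^+ k.
Proof. by elim: k => // k IH; rewrite !exprS seriesM0 IH. Qed.

Lemma size_sinv_seq (f : series) n : size (sinv_seq f n) = n.+1.
Proof. by elim: n => //= n IH; rewrite size_rcons IH. Qed.

Lemma nth_sinv_seq (f : series) n m : (m <= n)%N -> nth 0 (sinv_seq f n) m = sinv f m.
Proof.
elim: n => [|n IH]; first by rewrite leqn0 => /eqP ->.
rewrite leq_eqVlt => /orP [/eqP -> //| lt_mn].
by rewrite /= nth_rcons size_sinv_seq lt_mn IH.
Qed.

Lemma sinvS (f : series) n :
  sinv f n.+1 = - (f 0%N)^-1 * \sum_(i < n.+1) f i.+1 * sinv f (n - i)%N.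
Proof.
rewrite {1}/sinv /= nth_rcons size_sinv_seq ltnn eqxx; congr (_ * _).
by apply: eq_bigr => i _; rewrite nth_sinv_seq // leq_subr.
Qed.

Lemma smul_sinv (f : series) : f 0%N != 0 -> smul f (sinv f) = 1.
Proof.
move=> f0; apply/funext => -[|n]; first by rewrite /smul big_ord1 /= divff.
rewrite /smul big_ord_recl /= subn0 sinvS mulrA mulrN divff // mulN1r.
by rewrite /GRing.one /= /sone /sconst addNr.
Qed.

Definition sunit : pred series := fun f => f 0%N != 0.
Definition sinvr (f : series) : series := if f 0%N != 0 then sinv f else f.

Lemma smulVr : {in sunit, left_inverse 1 sinvr *%R}.
Proof.
move=> f f0; have f0' : f 0%N != 0 by exact: f0.
by rewrite /sinvr f0' mulrC; apply: smul_sinv.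
Qed.

Lemma sunitPl (f g : series) : g * f = 1 -> sunit f.
Proof.
move=> /(congr1 (fun h : series => h 0%N)); rewrite seriesM0 => gf0.
by apply/eqP => f0; move: gf0; rewrite f0 mulr0 => /eqP; rewrite eq_sym oner_eq0.
Qed.

Lemma sinvr_out : {in [predC sunit], sinvr =1 id}.
Proof. by move=> f; rewrite inE /= /sinvr /in_mem /= /sunit; case: (f 0%N != 0). Qed.

HB.instance Definition _ :=
  GRing.ComNzRing_hasMulInverse.Build series smulVr sunitPl sinvr_out.

Lemma unit_seriesE (f : series) : (f \is a GRing.unit) = (f 0%N != 0).
Proof. by []. Qed.

Lemma sinvE (f : series) : f 0%N != 0 -> sinv f = f^-1.
Proof. by move=> f0; rewrite /GRing.inv /= /sinvr f0. Qed.

Lemma seriesV0 (f : series) : f 0%N != 0 -> (f^-1) 0%N = (f 0%N)^-1.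
Proof. by move=> f0; rewrite -sinvE. Qed.

Lemma sscaleE (c : C) (f : series) : sscale c f = sconst c * f.
Proof.
apply/funext=> n; rewrite /GRing.mul /= /smul big_ord_recl /sconst /= subn0.
by rewrite big1 ?addr0 // => i _; rewrite mul0r.
Qed.

Lemma sconstD (a b : C) : sconst (a + b) = sconst a + sconst b.
Proof. by apply/funext=> n; rewrite seriesD /sconst; case: (n == 0%N); rewrite ?addr0. Qed.

Lemma sconstM (a b : C) : sconst (a * b) = sconst a * sconst b.
Proof.
rewrite -sscaleE; apply/funext=> n; rewrite /sscale /sconst.
by case: (n == 0%N); rewrite ?mulr0.
Qed.

Lemma spowE (f : series) k : spow f k = f ^+ k.
Proof. by elim: k => // k IH; rewrite exprS -IH. Qed.

Lemma spowzE (f : series) z : f 0%N != 0 -> spowz f z = f ^ z.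
Proof.
move=> f0; case: z => n; first exact: spowE.
by rewrite /spowz spowE sinvE // NegzE -exprnN exprVn.
Qed.

Definition supp3 (r : int) (f : series) : Prop :=
  forall n : nat, f n != 0 -> ((n%:Z - r) %% 3 = 0)%Z.

Lemma supp3_shift r r' (f : series) : ((r - r') %% 3 = 0)%Z -> supp3 r f -> supp3 r' f.
Proof. by move=> rr' Hf n /Hf; lia. Qed.

Lemma supp3M r s (f g : series) : supp3 r f -> supp3 s g -> supp3 (r + s) (f * g).
Proof.
move=> Hf Hg n fg; apply/eqP; move: fg; apply: contraNT => Hn; apply/eqP/big1 => i _.
have [->|fi] := eqVneq (f i) 0; first by rewrite mul0r.
have [->|gi] := eqVneq (g (n - i)%N) 0; first by rewrite mulr0.
have le_in : (i <= n)%N by rewrite -ltnS.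
move: Hn => /negP[]; have := Hf _ fi; have := Hg _ gi; rewrite -subzn //; lia.
Qed.

Lemma supp3_1 : supp3 0 1.
Proof. by move=> [|n] //; rewrite /GRing.one /= /sone /sconst /= eqxx. Qed.

Lemma supp3X (f : series) k : supp3 0 f -> supp3 0 (f ^+ k).
Proof.
move=> Hf; elim: k => [|k IH]; first exact: supp3_1.
by rewrite exprS -[0]addr0; apply: supp3M.
Qed.

(* Inversion preserves the support: by strong induction, the recursion
   [sinvS] writes coefficient n of [sinv f] through products whose factors
   are both supported on multiples of 3 only if n is. *)
Lemma supp3V (f : series) : f 0%N != 0 -> supp3 0 f -> supp3 0 f^-1.
Proof.
move=> f0 Hf; rewrite -(sinvE f0) => n; elim: n {-2}n (leqnn n) => [|N IH] n le_nN.
  by move: le_nN; rewrite leqn0 => /eqP ->.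
case: n le_nN => [//|n]; rewrite ltnS => le_nN fn; apply/eqP; move: fn; apply: contraNT => Hn.
rewrite sinvS; apply/eqP.
rewrite [X in _ * X]big1 ?mulr0 // => i _.
have [->|fi] := eqVneq (f i.+1) 0; first by rewrite mul0r.
have [->|gi] := eqVneq (sinv f (n - i)%N) 0; first by rewrite mulr0.
have le_in : (i <= n)%N by rewrite -ltnS.
move: Hn => /negP[]; have := Hf _ fi.
have := IH _ (leq_trans (leq_subr i n) le_nN) gi; rewrite -subzn //; lia.
Qed.

Lemma supp3_binom c d : (3 %| d)%N -> supp3 0 (sbinom c d).
Proof.
move=> /dvdnP [k ->] n; rewrite /sbinom; case: (n =P 0%N) => [-> //|_].
by case: (n =P (k * 3)%N) => [->|_]; rewrite ?eqxx // PoszM; lia.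
Qed.

Lemma supp3_infprod (F : nat -> series) : (forall n, supp3 0 (F n)) -> supp3 0 (sinfprod F).
Proof.
move=> HF k; suff: supp3 0 (sprod_upto F k) by apply.
elim: k => [|k IH] /=; first exact: supp3_1.
by have := supp3M IH (HF k.+1); rewrite addr0.
Qed.

Lemma sproj3M (r s : int) (F g : series) :
  supp3 s F -> sproj3 (r + s) (F * g) = F * sproj3 r g.
Proof.
move=> HF; apply/funext => n; rewrite /sproj3 /GRing.mul /= /smul.
have class_shift (i : 'I_n.+1) : F i != 0 ->
    ((n%:Z - (r + s)) %% 3 == 0)%Z = (((n - i)%N%:Z - r) %% 3 == 0)%Z.
  have le_in : (i <= n)%N by rewrite -ltnS.
  by move=> /HF; rewrite -subzn // => Hi; apply/eqP/eqP; lia.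
case: ifP => Hn; [apply: eq_bigr | rewrite big1 //] => i _;
  have [->|/class_shift <-] := eqVneq (F i) 0; rewrite ?mul0r ?Hn ?mulr0 //.
Qed.

Lemma cstD a b : cst (a + b) = cst a + cst b.
Proof. by rewrite /cst /tofracC polyCD tofracD. Qed.
Lemma cstX a n : cst (a ^+ n) = cst a ^+ n.
Proof. by rewrite /cst /tofracC polyC_exp rmorphXn. Qed.

Lemma epsC_eq : epsC ^+ 2 + epsC + 1 = 0.
Proof.
have eps_eq : eps ^+ 2 + eps + 1 = 0.
  have h2 : (2 : algC) != 0 by rewrite pnatr_eq0.
  have -> : eps ^+ 2 + eps + 1 = ('i ^+ 2 * sqrtC 3 ^+ 2 + 3) / 4 by rewrite /eps; field.
  by rewrite sqrCi sqrtCK mulN1r addNr mul0r.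
by rewrite /epsC -cstX -[1]tofrac1 -polyC1 -!cstD eps_eq /cst /tofracC tofrac0.
Qed.

Lemma epsC_neq0 : epsC != 0.
Proof. by apply/eqP => e0; move: epsC_eq; rewrite e0 expr0n /= !add0r; apply/eqP/oner_neq0. Qed.

Lemma eps_sum : epsC + epsC ^+ 2 = -1.
Proof. by apply/eqP; rewrite -subr_eq0 opprK -epsC_eq; apply/eqP; ring. Qed.

Lemma epsC_mod (z : int) : epsC ^ z = epsC ^ (z %% 3)%Z.
Proof.
have eps3 : epsC ^+ 3 = 1.
  apply/eqP; rewrite -subr_eq0.
  have -> : epsC ^+ 3 - 1 = (epsC - 1) * (epsC ^+ 2 + epsC + 1) by ring.
  by rewrite epsC_eq mulr0.
rewrite {1}(divz_eq z 3) expfzDr ?epsC_neq0 // [X in epsC ^ X * _]mulrC -exprz_exp.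
have -> : epsC ^ 3%:Z = 1 by exact: eps3.
by rewrite exp1rz mul1r.
Qed.

Lemma epsC_trace (l : nat) : (l <= 2)%N ->
  epsC ^ (l%:Z) + epsC ^ (- l%:Z) = if l == 0%N then 2 else -1.
Proof.
case: l => [|[|[|]]] //= _; rewrite [epsC ^ (- _)]epsC_mod.
- have -> : ((- (1%:Z)) %% 3)%Z = 2%:Z by lia.
  by rewrite -eps_sum.
- have -> : ((- (2%:Z)) %% 3)%Z = 1%:Z by lia.
  by rewrite -eps_sum addrC.
Qed.

Definition box_range (k : nat) : seq int :=
  [seq (i%:Z - (k.+1)%:Z) | i <- iota 0 (2 * k + 3)].
Definition box (k : nat) : seq (int * int) :=
  [seq (m, n) | m <- box_range k, n <- box_range k].

Lemma lattice_sumE e w k :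
  lattice_sum e w k = \sum_(p <- box k | e p.1 p.2 == k%:Z) w p.1 p.2.
Proof.
have ord_iota n (F : nat -> C) : \sum_(i < n) F i = \sum_(i <- iota 0 n) F i.
  by rewrite -(big_mkord xpredT) /index_iota subn0.
pose G m n := if e m n == k%:Z then w m n else 0.
pose sh (i : nat) := i%:Z - (k.+1)%:Z.
rewrite /box big_mkcond /= big_allpairs /box_range big_map /lattice_sum.
rewrite (ord_iota _ (fun i => \sum_(j < 2 * k + 3) G (sh i) (sh j))).
by apply: eq_bigr => i _; rewrite big_map (ord_iota _ (fun j => G (sh i) (sh j))).
Qed.

Lemma mem_box k (m n : int) :
  `|m| <= (k.+1)%:Z -> `|n| <= (k.+1)%:Z -> (m, n) \in box k.
Proof.
have mem_range (x : int) : `|x| <= (k.+1)%:Z -> x \in box_range k.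
  move=> le_x; apply/mapP; exists (absz (x + (k.+1)%:Z)); last by lia.
  by rewrite mem_iota; apply/andP; split; lia.
by move=> /mem_range Hm /mem_range Hn; apply: allpairs_f.
Qed.

Lemma uniq_box k : uniq (box k).
Proof.
have uniq_range : uniq (box_range k).
  by rewrite map_inj_uniq ?iota_uniq // => i j /addIr [].
by apply: allpairs_uniq => // -[a b] [c d] _ _ /= [-> ->].
Qed.

Lemma big_reindex (R : nmodType) (T : eqType) (s : seq T) (P Q : pred T)
    (phi : T -> T) (w v : T -> R) :
  uniq s -> {subset P <= s} -> {subset Q <= s} -> injective phi ->
  (forall q, Q q -> P (phi q)) -> (forall p, P p -> exists2 q, Q q & p = phi q) ->
  (forall q, Q q -> w (phi q) = v q) ->
  \sum_(p <- s | P p) w p = \sum_(q <- s | Q q) v q.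
Proof.
move=> Us sP sQ inj_phi QP PQ wv.
transitivity (\sum_(q <- s | Q q) w (phi q)); last exact: eq_bigr.
rewrite -big_filter -[RHS]big_filter -(big_map phi xpredT w).
apply: perm_big; apply: uniq_perm; rewrite ?filter_uniq ?map_inj_uniq ?filter_uniq //.
move=> p; rewrite mem_filter; apply/andP/mapP => [[Pp _]|[q]].
  by have [q Qq ->] := PQ _ Pp; exists q; rewrite // mem_filter Qq sQ.
by rewrite mem_filter => /andP [Qq _] ->; split; [apply: QP | apply: sP; apply: QP].
Qed.

Definition qA2v (p : int * int) : int := 2 * (p.1 * p.1 + p.1 * p.2 + p.2 * p.2).
Definition qA2 (p : int * int) : int := 6 * (p.1 * p.1 - p.1 * p.2 + p.2 * p.2).
Definition qA2_10 (p : int * int) : int :=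
  6 * (p.1 * p.1 - p.1 * p.2 + p.2 * p.2 + p.1 - p.2) + 2.
Definition cls3 (p : int * int) : int := ((p.1 - p.2) %% 3)%Z.
Definition ymon (p : int * int) : C := yvar ^ (p.1 + p.2).

(* Coefficient of x^k in the part of Theta_{A2^v,(0,0)}(x,y) coming from the
   coset m - n = j (mod 3) of the sublattice isometric to A2(3). *)
Definition theta_cls (k : nat) (j : int) : C :=
  \sum_(p <- box k | (qA2v p == k%:Z) && (cls3 p == j)) ymon p.

Lemma abs_le_sqr (m : int) : `|m| <= m * m. Proof. by case: (lerP 0 m); nia. Qed.
Lemma sqr_int_ge0 (m : int) : 0 <= m * m. Proof. by rewrite -expr2 sqr_ge0. Qed.

(* All three forms are positive definite: a value k forces |m|, |n| <= k + 1. *)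
Lemma box_qA2v k p : qA2v p = k%:Z -> p \in box k.
Proof.
case: p => m n; rewrite /qA2v /= => H; apply: mem_box; have := sqr_int_ge0 (m + n);
  have := sqr_int_ge0 m; have := sqr_int_ge0 n; have := abs_le_sqr m; have := abs_le_sqr n; lia.
Qed.
Lemma box_qA2 k p : qA2 p = k%:Z -> p \in box k.
Proof.
case: p => m n; rewrite /qA2 /= => H; apply: mem_box; have := sqr_int_ge0 (m - n);
  have := sqr_int_ge0 m; have := sqr_int_ge0 n; have := abs_le_sqr m; have := abs_le_sqr n; lia.
Qed.
Lemma box_qA2_10 k p : qA2_10 p = k%:Z -> p \in box k.
Proof.
case: p => m n; rewrite /qA2_10 /= => H; apply: mem_box; have := sqr_int_ge0 (m - n + 1);
  have := sqr_int_ge0 m; have := sqr_int_ge0 n; have := abs_le_sqr m; have := abs_le_sqr n; lia.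
Qed.

(* The swap (m, n) -> (n, m) exchanges the cosets 1 and 2. *)
Lemma theta_cls_swap k : theta_cls k 1 = theta_cls k 2.
Proof.
apply: (@big_reindex _ _ _ _ _ (fun q => (q.2, q.1))).
- exact: uniq_box.
- by move=> p /andP [/eqP /box_qA2v].
- by move=> p /andP [/eqP /box_qA2v].
- by move=> [a b] [c d] /= [-> ->].
- by move=> [a b] /andP [/eqP H1 /eqP H2]; apply/andP; split; apply/eqP;
    move: H1 H2; rewrite /qA2v /cls3 /=; lia.
- move=> [a b] /andP [/eqP H1 /eqP H2]; exists (b, a) => //.
  by apply/andP; split; apply/eqP; move: H1 H2; rewrite /qA2v /cls3 /=; lia.
- by move=> [a b] _; rewrite /ymon /= addrC.
Qed.

(* The coset 0 of the sublattice is the image of A2(3) under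
   (m, n) -> (2m - n, 2n - m), which turns qA2 into qA2v. *)
Lemma theta_cls0 k : theta_cls k 0 = ThetaA2_00_x3 k.
Proof.
rewrite /ThetaA2_00_x3 lattice_sumE.
apply: (@big_reindex _ _ _ _ (fun q => qA2 q == k%:Z) (fun q => (2 * q.1 - q.2, 2 * q.2 - q.1)) _ ymon).
- exact: uniq_box.
- by move=> p /andP [/eqP /box_qA2v].
- by move=> p /eqP /box_qA2.
- by move=> [a b] [c d] /= [H1 H2]; congr (_, _); lia.
- move=> [a b] /eqP H; apply/andP; split; apply/eqP; move: H; rewrite /qA2v /qA2 /cls3 /=.
    by move=> <-; ring.
  by move=> _; lia.
- move=> [m n] /andP [/eqP H1 /eqP H2]; move: H2; rewrite /cls3 /= => H2.
  have Ht := divz_eq (m - n) 3; rewrite H2 addr0 in Ht.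
  set t := ((m - n) %/ 3)%Z in Ht; exists (m - t, n + t); last by congr (_, _) => /=; lia.
  apply/eqP; rewrite -H1.
  have -> : qA2 (m - t, n + t) = qA2v (2 * (m - t) - (n + t), 2 * (n + t) - (m - t)).
    by rewrite /qA2 /qA2v /=; ring.
  by congr qA2v; congr (_, _) => /=; lia.
- by move=> [a b] _; rewrite /ymon /=; congr (_ ^ _); ring.
Qed.

(* The coset 2 is the image of the shifted lattice under
   (m, n) -> (2m - n + 1, 2n - m - 1), which turns qA2_10 into qA2v. *)
Lemma theta_cls2 k : theta_cls k 2 = ThetaA2_10_x3 k.
Proof.
rewrite /ThetaA2_10_x3 lattice_sumE.
apply: (@big_reindex _ _ _ _ (fun q => qA2_10 q == k%:Z)
          (fun q => (2 * q.1 - q.2 + 1, 2 * q.2 - q.1 - 1)) _ ymon).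
- exact: uniq_box.
- by move=> p /andP [/eqP /box_qA2v].
- by move=> p /eqP /box_qA2_10.
- by move=> [a b] [c d] /= [H1 H2]; congr (_, _); lia.
- move=> [a b] /eqP H; apply/andP; split; apply/eqP; move: H; rewrite /qA2v /qA2_10 /cls3 /=.
    by move=> <-; ring.
  by move=> _; lia.
- move=> [m n] /andP [/eqP H1 /eqP H2]; move: H2; rewrite /cls3 /= => H2.
  have Ht := divz_eq (m - n) 3; rewrite H2 in Ht.
  set t := ((m - n) %/ 3)%Z in Ht; clearbody t.
  exists (m - 1 - t, n + 1 + t); last by congr (_, _) => /=; lia.
  apply/eqP; rewrite -H1.
  have -> : qA2_10 (m - 1 - t, n + 1 + t) =
      qA2v (2 * (m - 1 - t) - (n + 1 + t) + 1, 2 * (n + 1 + t) - (m - 1 - t) - 1).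
    by rewrite /qA2_10 /qA2v /=; ring.
  by congr qA2v; congr (_, _) => /=; lia.
- by move=> [a b] _; rewrite /ymon /=; congr (_ ^ _); ring.
Qed.

Lemma big_cls3 k (f : int * int -> C) :
  \sum_(p <- box k | qA2v p == k%:Z) f p =
  \sum_(p <- box k | (qA2v p == k%:Z) && (cls3 p == 0)) f p +
  \sum_(p <- box k | (qA2v p == k%:Z) && (cls3 p == 1)) f p +
  \sum_(p <- box k | (qA2v p == k%:Z) && (cls3 p == 2)) f p.
Proof.
rewrite !(big_mkcond (fun p => (_ == _) && _)) -!big_split big_mkcond /=.
apply: eq_bigr => p _; case: (qA2v p == k%:Z) => /=; last by rewrite !addr0.
have : cls3 p = 0 \/ cls3 p = 1 \/ cls3 p = 2 by rewrite /cls3; lia.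
by case=> [->|[->|->]]; rewrite /= ?addr0 ?add0r.
Qed.

Lemma ThetaA2v_00_cls k : ThetaA2v_00 yvar k = theta_cls k 0 + theta_cls k 1 + theta_cls k 2.
Proof. by rewrite /ThetaA2v_00 lattice_sumE -/qA2v (big_cls3 k ymon). Qed.

(* The character epsilon^(m-n) is constant on each coset. *)
Lemma ThetaA2v_01_cls k :
  ThetaA2v_01 yvar k = theta_cls k 0 + epsC * theta_cls k 1 + epsC ^+ 2 * theta_cls k 2.
Proof.
rewrite /ThetaA2v_01 lattice_sumE (big_cls3 k (fun p => epsC ^ (p.1 - p.2) * ymon p)).
rewrite /theta_cls !big_distrr /=; congr (_ + _ + _); apply: eq_bigr => p /andP [_ /eqP Hc];
  by rewrite epsC_mod -/(cls3 p) Hc ?mul1r.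
Qed.

Definition theta_blowup (l : nat) : series :=
  if l == 0%N then ThetaA2_00_x3 else ThetaA2_10_x3.

(* Theta_{A2^v,(0,0)} + (eps^l + eps^-l) Theta_{A2^v,(0,1)} = 3 Theta_{A2,(l)}(x^3):
   the left side is a combination of the coset sums in which, by
   [epsC_trace], only the coset l survives. *)
Lemma theta_blowup_identity (l : nat) : (l <= 2)%N ->
  ThetaA2v_00 yvar + sconst (epsC ^ (l%:Z) + epsC ^ (- l%:Z)) * ThetaA2v_01 yvar
  = sconst 3 * theta_blowup l.
Proof.
move=> le_l2; apply/funext => k; rewrite seriesD -!sscaleE /sscale epsC_trace //.
rewrite ThetaA2v_00_cls ThetaA2v_01_cls -theta_cls_swap /theta_blowup.
have eps2 : epsC ^+ 2 = - 1 - epsC by rewrite -eps_sum; ring.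
case: (l == 0%N); rewrite -?theta_cls0 -?theta_cls2 -?theta_cls_swap eps2; ring.
Qed.

(* A nonzero coefficient of x^k in a lattice sum needs a point of weight k;
   hence the exponents of Theta_{A2,(0,0)}(x^3) are 0 and those of
   Theta_{A2,(1,0)}(x^3) are 2 modulo 3. *)
Lemma lattice_sum_support e w k :
  lattice_sum e w k != 0 -> exists m n, e m n = k%:Z.
Proof.
apply: contraNP => no_mn; rewrite /lattice_sum big1 // => i _; rewrite big1 // => j _.
by case: ifP => // /eqP emn; case: no_mn; do 2 eexists; exact: emn.
Qed.

Lemma supp3_ThetaA2_00 : supp3 0 ThetaA2_00_x3.
Proof. by move=> k /lattice_sum_support [m [n]]; lia. Qed.
Lemma supp3_ThetaA2_10 : supp3 2 ThetaA2_10_x3.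
Proof. by move=> k /lattice_sum_support [m [n]]; lia. Qed.

(* Only (m, n) = (0, 0) contributes to the constant terms. *)
Lemma qA2v_eq0 : [seq p <- box 0 | qA2v p == 0%:Z] = [:: (0, 0)].
Proof. by vm_compute. Qed.

Lemma ThetaA2v_00_const yv : ThetaA2v_00 yv 0%N = 1.
Proof. by rewrite /ThetaA2v_00 lattice_sumE -/qA2v -big_filter qA2v_eq0 big_seq1 expr0z. Qed.

Lemma ThetaA2v_01_const yv : ThetaA2v_01 yv 0%N = 1.
Proof.
by rewrite /ThetaA2v_01 lattice_sumE -/qA2v -big_filter qA2v_eq0 big_seq1 !expr0z mul1r.
Qed.

Lemma natC_neq0 n : (n.+1%:R : C) != 0.
Proof.
rewrite /C -(rmorph_nat (@FracField.tofrac _)) tofrac_eq0 -polyC_natr polyC_eq0.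
by rewrite pnatr_eq0.
Qed.

Lemma ThetaA2v_01_unit yv : ThetaA2v_01 yv \is a GRing.unit.
Proof. by rewrite unit_seriesE ThetaA2v_01_const oner_neq0. Qed.

Lemma ZserE yv : Zser yv = ThetaA2v_00 yv / ThetaA2v_01 yv.
Proof. by rewrite /Zser sinvE // ThetaA2v_01_const oner_eq0. Qed.

Lemma Zser_const yv : Zser yv 0%N = 1.
Proof.
rewrite ZserE seriesM0 seriesV0 ThetaA2v_01_const ?oner_eq0 //.
by rewrite ThetaA2v_00_const invr1 mulr1.
Qed.

Lemma inv_add (R : comUnitRingType) (a b : R) : a \is a GRing.unit -> b \is a GRing.unit ->
  a^-1 + b^-1 = (a + b) / (a * b).
Proof.
by move=> ua ub; rewrite invrM // mulrDl mulrCA divrr // mulr1 mulrA divrr // mul1r addrC.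
Qed.

Lemma Zpm_inv_sum (zp zm : series) : are_Zpm zp zm ->
  [/\ zp \is a GRing.unit, zm \is a GRing.unit & zp^-1 + zm^-1 = Zser yvar].
Proof.
move=> [Hsum Hprod].
have sumE : zp + zm = Ztr by apply/funext.
have prodE : zp * zm = Znm by apply/funext.
have ZnmE : Znm = Zser yvar + sconst 3%:R * Zser 1 by rewrite -sscaleE.
have ZtrE : Ztr = Zser yvar * Znm.
  by rewrite ZnmE mulrDr [Zser yvar * (_ * _)]mulrCA -sscaleE.
have Znm_unit : Znm \is a GRing.unit.
  by rewrite unit_seriesE ZnmE seriesD seriesM0 !Zser_const mulr1 /sconst /= -(natrD C 1 3) natC_neq0.
have := Znm_unit; rewrite -prodE unit_seriesE seriesM0 mulf_eq0 negb_or.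
move=> /andP [up um]; split; [exact: up | exact: um |].
by rewrite (@inv_add _ zp zm up um) sumE prodE ZtrE (mulrK Znm_unit).
Qed.

Lemma etabar3_const : (etabar_x6 ^+ 3) 0%N = 1.
Proof. by rewrite seriesX0 expr1n. Qed.

Lemma HserE : Hser = ThetaA2v_01 yvar / (sconst 3%:R * etabar_x6 ^+ 3).
Proof.
by rewrite /Hser sinvE ?sscaleE ?spowE // seriesM0 etabar3_const mulr1 natC_neq0.
Qed.

Lemma Hser_unit : Hser \is a GRing.unit.
Proof.
have den_const : (sconst 3%:R * etabar_x6 ^+ 3) 0%N = 3%:R.
  by rewrite seriesM0 etabar3_const mulr1.
rewrite unit_seriesE HserE seriesM0 seriesV0 den_const ?natC_neq0 //.
by rewrite ThetaA2v_01_const mul1r invr_eq0 natC_neq0.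
Qed.

Lemma Hser_blowup (l : nat) : (l <= 2)%N ->
  Hser * (Zser yvar + sconst (epsC ^ (l%:Z) + epsC ^ (- l%:Z)))
  = theta_blowup l / etabar_x6 ^+ 3.
Proof.
move=> le_l2; have u3 : sconst 3%:R \is a GRing.unit by rewrite unit_seriesE natC_neq0.
have uE : etabar_x6 ^+ 3 \is a GRing.unit.
  by rewrite unit_seriesE etabar3_const oner_neq0.
have uT := ThetaA2v_01_unit yvar.
have := theta_blowup_identity le_l2; rewrite HserE ZserE (invrM u3 uE).
set T0 := ThetaA2v_00 _; set T1 := ThetaA2v_01 _; set s := sconst (_ + _).
set X := theta_blowup l; set E := etabar_x6 ^+ 3; set c := sconst 3%:R => Hid.
have -> : T1 * (E^-1 * c^-1) * (T0 * T1^-1 + s) = E^-1 * c^-1 * (T0 * (T1 / T1) + s * T1).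
  by ring.
by rewrite (divrr uT) mulr1 Hid mulrA -(mulrA _ _ c) (mulVr u3) mulr1 mulrC.
Qed.

Lemma supp3_blowup_factor (l : nat) : (l <= 2)%N ->
  supp3 (2 * l%:Z * l%:Z) (theta_blowup l / etabar_x6 ^+ 3).
Proof.
move=> le_l2.
have supp_eta : supp3 0 (etabar_x6 ^+ 3)^-1.
  apply: supp3V; first by rewrite etabar3_const oner_neq0.
  by apply/supp3X/supp3_infprod => k; apply: supp3_binom; rewrite dvdn_mulr.
have supp0 := supp3M supp3_ThetaA2_00 supp_eta; rewrite addr0 in supp0.
have supp2 := supp3M supp3_ThetaA2_10 supp_eta; rewrite addr0 in supp2.
rewrite /theta_blowup; case: l le_l2 => [|[|[|l]]] le_l2 /=.
- exact: supp0.
- exact: supp2.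
- exact: (supp3_shift _ supp2).
- by exfalso; lia.
Qed.

Section SWSum.
Variables (V : zmodType) (dot : V -> V -> int) (K : V) (SW : V -> int) (c : V).
Variables (zp zm : series).

Definition sw_term (a b : V) : series :=
  sconst ((SW a * SW b)%:~R * epsC ^ dot (a - b) c) * zp ^ dot a b * zm ^ dot (K - a) (K - b).

Definition sw_sum (B : seq V) : series := \sum_(a <- B) \sum_(b <- B) sw_term a b.

Hypotheses (zp0 : zp 0%N != 0) (zm0 : zm 0%N != 0).

Lemma psiE chi (B : seq V) :
  psi dot chi K SW B (fun a b => a - b) c zp zm =
  sconst 9%:R * (spowz Gser chi * (spowz Hser (- dot K K) * sw_sum B)).
Proof.
rewrite /psi sscaleE; congr (_ * (_ * (_ * _))); apply/funext => n.
rewrite /sw_sum series_sum; apply: eq_bigr => a _; rewrite series_sum; apply: eq_bigr => b _.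
by rewrite /sw_term sscaleE (spowzE _ zp0) (spowzE _ zm0).
Qed.

End SWSum.

Section BlowUp.
Variables (V : zmodType) (dot : V -> V -> int) (K : V) (SW : V -> int) (c1 : V) (l : nat).
Variables (zp zm : series).
Hypotheses (up : zp \is a GRing.unit) (um : zm \is a GRing.unit).

Lemma bl_canonical : bl_pull K + bl_E V = (K, 1).
Proof. by rewrite /bl_pull /bl_E; congr pair; rewrite ?addr0 ?add0r. Qed.

Lemma bl_class : bl_pull c1 - bl_E V *+ l = (c1, - l%:Z).
Proof.
have -> : bl_E V *+ l = (0, l%:Z).
  by elim: l => // n IH; rewrite mulrS IH /bl_E /=; congr pair; rewrite ?addr0 // -add1n PoszD.
by rewrite /bl_pull /=; congr pair; rewrite ?subr0 ?sub0r.
Qed.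

Lemma bl_basis (B : seq V) : bl_B B = [seq (a, 0) | a <- B] ++ [seq (a, 1) | a <- B].
Proof.
rewrite /bl_B; congr (_ ++ _); apply: eq_map => a //.
by rewrite /bl_pull /bl_E; congr pair; rewrite ?addr0 ?add0r.
Qed.

Lemma bl_term a b (s t : int) :
  bl_SW SW (a, s) = SW a -> bl_SW SW (b, t) = SW b ->
  sw_term (bl_dot dot) (K, 1) (bl_SW SW) (c1, - l%:Z) zp zm (a, s) (b, t) =
  sw_term dot K SW c1 zp zm a b * sconst (epsC ^ ((s - t) * l%:Z)) * zp ^ (- (s * t))
     * zm ^ (- ((1 - s) * (1 - t))).
Proof.
move=> SWa SWb; rewrite /sw_term /bl_dot /= SWa SWb.
have -> : dot (a - b) c1 - (s - t) * - l%:Z = dot (a - b) c1 + (s - t) * l%:Z by ring.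
rewrite expfzDr ?epsC_neq0 // mulrA sconstM (exprzDr up) (exprzDr um).
ring.
Qed.

Lemma bl_sw_sum (B : seq V) :
  sw_sum (bl_dot dot) (bl_pull K + bl_E V) (bl_SW SW) (bl_pull c1 - bl_E V *+ l) zp zm (bl_B B)
  = sw_sum dot K SW c1 zp zm B *
    (zm^-1 + sconst (epsC ^ (- l%:Z)) + sconst (epsC ^ (l%:Z)) + zp^-1).
Proof.
have SW0 a : bl_SW SW (a, 0) = SW a by [].
have SW1 a : bl_SW SW (a, 1) = SW a by [].
rewrite /sw_sum bl_canonical bl_class bl_basis big_cat /= !big_map.
rewrite big_distrl /= -big_split /=; apply: eq_bigr => a _.
rewrite !big_cat /= !big_map -!big_split big_distrl /=; apply: eq_bigr => b _.
rewrite !bl_term // !(subrr, subr0, sub0r, mul0r, mulr0, mul1r, mulr1, mulN1r, oppr0, expr0z).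
by rewrite !exprN1 !mulrDr !addrA.
Qed.

End BlowUp.

(* The blow-up multiplies psi by Theta_{A2,(l)}(x^3,y) / etabar(x^6)^3:
   K~^2 = K^2 - 1 contributes a factor H, the SW sum a factor
   1/Z_+ + 1/Z_- + eps^l + eps^-l = Z + eps^l + eps^-l, and
   [Hser_blowup] evaluates the product. *)
Lemma psi_blowup (V : zmodType) (dot : V -> V -> int) (K : V) (chi : int)
    (SW : V -> int) (B : seq V) (c1 : V) (l : nat) (zp zm : series) :
  (l <= 2)%N -> are_Zpm zp zm ->
  psi (bl_dot dot) chi (bl_pull K + bl_E V) (bl_SW SW) (bl_B B)
      (fun a b => a - b) (bl_pull c1 - bl_E V *+ l) zp zm
  = theta_blowup l / etabar_x6 ^+ 3 * psi dot chi K SW B (fun a b => a - b) c1 zp zm.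
Proof.
move=> le_l2 HZ; have [up um inv_sum] := Zpm_inv_sum HZ.
have KK : bl_dot dot (bl_pull K + bl_E V) (bl_pull K + bl_E V) = dot K K - 1.
  by rewrite bl_canonical /bl_dot /= mulr1.
have zp0 : zp 0%N != 0 := up; have zm0 : zm 0%N != 0 := um.
rewrite !(psiE _ _ _ _ zp0 zm0) (bl_sw_sum _ _ _ _ _ up um) KK !(spowzE _ Hser_unit).
rewrite opprB (exprzDr Hser_unit) expr1z -(Hser_blowup le_l2) -inv_sum.
by rewrite (sconstD (epsC ^ l%:Z)); ring.
Qed.

Unset Implicit Arguments. Set Strict Implicit.

(* Since c~^2 = c1^2 - l^2, the residue class selected by
   the projection shifts by 2 l^2, which is exactly the class supporting the
   factor ([supp3_blowup_factor]), so the factor commutes with the projection. *)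
Theorem mainTheorem7
  (V : zmodType) (dot : V -> V -> int)      (* H^2(S,Z) with intersection form *)
  (K : V) (chi : int) (pg : nat)            (* K_S, chi(O_S), p_g(S) *)
  (SW : V -> int) (B : seq V)               (* SW invariants, B contains supp SW *)
  (c1 : V) (l : nat) (zp zm : series) :
  is_pairing dot ->
  (forall a, ((dot a a - dot K a) %% 2 = 0)%Z) ->   (* K characteristic *)
  (0 < pg)%N -> chi = 1 + pg%:Z ->                    (* b_1 = 0, p_g > 0 *)
  uniq B -> (forall a, SW a != 0 -> a \in B) ->
  (l <= 2)%N ->
  are_Zpm zp zm ->
  forall n : nat,
    Zinst (bl_dot dot) chi (bl_pull K + bl_E V) (bl_SW SW) (bl_B B)
          (bl_pull c1 - bl_E V *+ l) zp zm n
    = smul (smul (if l == 0%N then ThetaA2_00_x3 else ThetaA2_10_x3)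
                 (sinv (spow etabar_x6 3)))
           (Zinst dot chi K SW B c1 zp zm) n.
Proof.
move=> _ _ _ _ _ _ le_l2 HZ n.
have class_shift : - 2 * bl_dot dot (bl_pull c1 - bl_E V *+ l) (bl_pull c1 - bl_E V *+ l)
    - 8 * chi = (- 2 * dot c1 c1 - 8 * chi) + 2 * l%:Z * l%:Z.
  by rewrite bl_class /bl_dot /=; ring.
rewrite /Zinst class_shift psi_blowup // (sproj3M _ _ (supp3_blowup_factor le_l2)).
have eta3_0 : spow etabar_x6 3 0%N != 0 by rewrite spowE etabar3_const oner_neq0.
by rewrite /theta_blowup (sinvE eta3_0) spowE.
Qed.
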